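(* If a game has a player $n$-transitive and strategy trivial symmetry group, then it is strictly isomorphic to a VNM symmetric game (i.e. there exist a VNM symmetric game $\Gamma'$ and a strict game isomorphism from the given game to $\Gamma'$).
   Context: A (finite normal-form) game $\Gamma=(N,A,u)$ consists of a finite set $N=\{1,\dots,n\}$ of $n\ge2$ players, a finite non-empty strategy set $A_i$ for each $i\in N$ (all of the same cardinality), $A=\times_{i\in N}A_i$, and utility functions $u_i:A\to\mathbb{R}$. A game bijection $g=(\pi;(\tau_i)_{i\in N})$ from $\Gamma_1=(N,A,u)$ to $\Gamma_2=(M,B,v)$ consists of a bijection $\pi:N\to M$ and bijections $\tau_i:A_i\to B_{\pi(i)}$; $g.i=\pi(i)$, $g.s_i=\tau_i(s_i)$, $g.s$ is the profile with $(g.s)_{\pi(i)}=\tau_i(s_i)$. It is a strict game isomorphism if $u_i(s)=v_{g.i}(g.s)$ for all $i,s$; an automorphism of $\Gamma$ is a strict game isomorphism from $\Gamma$ to itself. A symmetry group is a subgroup $G$ of the automorphism group; $G_i=\{g\in G:g.i=i\}$. $G$ is player $n$-transitive if for every $\pi\in S_N$ there is $g\in G$ with $g.i=\pi(i)$ for all $i$; strategy trivial if for every $i$ and every $g\in G_i$, $g.s_i=s_i$ for all $s_i\in A_i$. $\Gamma$ is VNM symmetric if $A_i=A_j$ for all $i,j$ and, for each $\pi\in S_N$, $u_{\pi(i)}(s_1,\dots,s_n)=u_i(s_{\pi(1)},\dots,s_{\pi(n)})$ for all $i\in N$, $(s_1,\dots,s_n)\in A$. *)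

From Stdlib Require Import Reals.
From mathcomp Require Import all_boot all_fingroup.
Set Implicit Arguments. Unset Strict Implicit. Unset Printing Implicit Defensive.

Record game := Game {
  player : finType;
  strat : player -> finType;
  util : player -> (forall i : player, strat i) -> Rdefinitions.R }.
Arguments strat : clear implicits.
Arguments util : clear implicits.

Definition is_game (G : game) : Prop :=
  [/\ 2 <= #|player G|,
      forall i, 0 < #|strat G i| &
      forall i j, #|strat G i| = #|strat G j| ].

Record gbij (G1 G2 : game) := GBij {
  gpi : player G1 -> player G2;
  gtau : forall i, strat G1 i -> strat G2 (gpi i) }.
Arguments gpi {G1 G2} g i.
Arguments gtau {G1 G2} g i s.

Definition is_gbij G1 G2 (g : gbij G1 G2) : Prop :=
  bijective (gpi g) /\ forall i, bijective (gtau g i).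

Definition prof_img G1 G2 (g : gbij G1 G2)
    (s : forall i, strat G1 i) (t : forall j, strat G2 j) : Prop :=
  forall i, t (gpi g i) = gtau g i (s i).

Definition strict_iso G1 G2 (g : gbij G1 G2) : Prop :=
  is_gbij g /\
  forall i s t, prof_img g s t -> util G1 i s = util G2 (gpi g i) t.

Definition automorphism G (g : gbij G G) : Prop := strict_iso g.

Definition gb_id G : gbij G G := @GBij G G id (fun i s => s).
Definition gb_comp G1 G2 G3 (h : gbij G2 G3) (g : gbij G1 G2) : gbij G1 G3 :=
  @GBij G1 G3 (fun i => gpi h (gpi g i)) (fun i s => gtau h (gpi g i) (gtau g i s)).

Definition gb_eq G1 G2 (g h : gbij G1 G2) : Prop :=
  forall i (s : strat G1 i),
    existT (fun j => strat G2 j) (gpi g i) (gtau g i s)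
    = existT (fun j => strat G2 j) (gpi h i) (gtau h i s).

Definition symmetry_group G (Gr : gbij G G -> Prop) : Prop :=
  [/\ forall g, Gr g -> automorphism g,
      Gr (gb_id G),
      forall g h, Gr g -> Gr h -> Gr (gb_comp h g) &
      forall g, Gr g -> exists2 h, Gr h &
        gb_eq (gb_comp h g) (gb_id G) /\ gb_eq (gb_comp g h) (gb_id G) ].

Definition player_n_transitive G (Gr : gbij G G -> Prop) : Prop :=
  forall p : {perm player G}, exists2 g, Gr g & forall i, gpi g i = p i.

Definition strategy_trivial G (Gr : gbij G G -> Prop) : Prop :=
  forall i g, Gr g -> gpi g i = i ->
    forall s : strat G i,
      existT (fun j => strat G j) (gpi g i) (gtau g i s)
      = existT (fun j => strat G j) i s.

Definition common_game (M S : finType)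
    (v : M -> (M -> S) -> Rdefinitions.R) : game :=
  @Game M (fun _ => S) v.

Definition vnm_symmetric (M S : finType) (v : M -> (M -> S) -> Rdefinitions.R) : Prop :=
  forall (p : {perm M}) (i : M) (s : M -> S), v (p i) s = v i (fun k => s (p k)).

From Stdlib Require Import Reals.
From mathcomp Require Import all_boot all_fingroup.
From Stdlib Require Import ClassicalEpsilon FunctionalExtensionality Eqdep_dec.

Set Implicit Arguments. Unset Strict Implicit. Unset Printing Implicit Defensive.

(* Fix a player i0 and, for every player k, some g_k in the group with
   g_k.i0 = k; the strategy maps of the g_k identify every A_k with A_(i0).
   Strategy triviality makes this identification independent of the choice of
   g_k, hence equivariant under the whole group.  Rewriting the game in the
   common strategy set A_(i0) is a strict isomorphism, and equivariance
   together with player n-transitivity turns the automorphism property of the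
   group into VNM symmetry. *)

Notation pstrat G := {i : player G & strat G i}.

Definition gb_act (G : game) (g : gbij G G) (x : pstrat G) : pstrat G :=
  existT (strat G) (gpi g (projT1 x)) (gtau g (projT1 x) (projT2 x)).

Lemma gb_act_comp G (g h : gbij G G) x :
  gb_act (gb_comp h g) x = gb_act h (gb_act g x).
Proof. by case: x. Qed.

Lemma existT_strat_inj (G : game) (i : player G) (a b : strat G i) :
  existT (strat G) i a = existT (strat G) i b -> a = b.
Proof. by apply: inj_pair2_eq_dec => x y; exact: eq_comparable. Qed.

Lemma existT_eq_rect (G : game) (i j : player G) (e : i = j) (a : strat G i) :
  existT (strat G) j (eq_rect i (strat G) a j e) = existT (strat G) i a.
Proof. by case: j / e. Qed.

Definition relabel_util (G : game) (S : finType) (r : forall k, S -> strat G k)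
    (j : player G) (t : player G -> S) : R :=
  util G j (fun k => r k (t k)).

Lemma strict_iso_relabel (G : game) (S : finType) (r : forall k, S -> strat G k) :
  (forall k, bijective (r k)) ->
  exists g : gbij G (common_game (relabel_util r)), strict_iso g.
Proof.
move=> r_bij.
have r_inv k : exists f, cancel (r k) f /\ cancel f (r k).
  by case: (r_bij k) => f rK fK; exists f.
pose tau k := proj1_sig (constructive_indefinite_description _ (r_inv k)).
have [rK tauK] : (forall k, cancel (r k) (tau k)) /\ (forall k, cancel (tau k) (r k)).
  by split=> k; case: (proj2_sig (constructive_indefinite_description _ (r_inv k))).
exists (@GBij G (common_game (relabel_util r)) id tau); split.
  by split=> [|k]; [exists id | exists (r k); [exact: tauK | exact: rK]].
move=> i s t st; rewrite /relabel_util /=; congr (util G i _).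
by apply: functional_extensionality_dep => k; rewrite (st k) tauK.
Qed.

Lemma vnm_symmetric_relabel (G : game) (Gr : gbij G G -> Prop) (S : finType)
    (r : forall k, S -> strat G k) :
  (forall g, Gr g -> automorphism g) -> player_n_transitive Gr ->
  (forall g k z, Gr g -> r (gpi g k) z = gtau g k (r k z)) ->
  vnm_symmetric (relabel_util r).
Proof.
move=> autGr transGr r_equi p i s.
have [g Gg gp] := transGr p.
have -> : (fun k => s (p k)) = (fun k => s (gpi g k)).
  by apply: functional_extensionality => k; rewrite gp.
rewrite /relabel_util -gp; symmetry.
by apply: (proj2 (autGr g Gg)) => k; rewrite r_equi.
Qed.

Section SymmetryGroup.

Variables (G : game) (Gr : gbij G G -> Prop).
Hypotheses (symGr : symmetry_group Gr) (trivGr : strategy_trivial Gr).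

Lemma symmetry_comp g h : Gr g -> Gr h -> Gr (gb_comp h g).
Proof. by case: symGr => _ _ compGr _; apply: compGr. Qed.

Lemma symmetry_gb_act_inv g : Gr g ->
  exists2 h, Gr h & cancel (gb_act g) (gb_act h) /\ cancel (gb_act h) (gb_act g).
Proof.
case: symGr => _ _ _ invGr Gg; have [h Gh [hg gh]] := invGr g Gg.
by exists h => //; split; case=> i s; [exact: hg | exact: gh].
Qed.

Lemma symmetry_gb_act_inj g : Gr g -> injective (gb_act g).
Proof. by case/symmetry_gb_act_inv=> h _ [gK _]; exact: can_inj gK. Qed.

(* h^-1 g fixes the player i, so it fixes each of i's strategies. *)
Lemma symmetry_gb_act_player g h i (s : strat G i) : Gr g -> Gr h ->
  gpi g i = gpi h i -> gb_act g (existT _ i s) = gb_act h (existT _ i s).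
Proof.
move=> Gg Gh ghi; have [h' Gh' [hK h'K]] := symmetry_gb_act_inv Gh.
have h'gi : gpi h' (gpi g i) = i.
  by rewrite ghi; have := f_equal (@projT1 _ _) (hK (existT _ i s)).
have := trivGr (symmetry_comp Gg Gh') h'gi s.
rewrite -/(gb_act (gb_comp h' g) (existT _ i s)) gb_act_comp => h'g_fix.
by rewrite -[gb_act g _]h'K h'g_fix.
Qed.

Variable i0 : player G.
Hypothesis transGr : player_n_transitive Gr.

Lemma exists_transporter k : exists g, Gr g /\ gpi g i0 = k.
Proof.
by have [g Gg gp] := transGr (tperm i0 k); exists g; rewrite gp tpermL.
Qed.

Definition transporter k : gbij G G :=
  proj1_sig (constructive_indefinite_description _ (exists_transporter k)).

Lemma transporterP k : Gr (transporter k) /\ gpi (transporter k) i0 = k.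
Proof.
exact: proj2_sig (constructive_indefinite_description _ (exists_transporter k)).
Qed.

Definition relabel k (z : strat G i0) : strat G k :=
  eq_rect _ (strat G) (gtau (transporter k) i0 z) k (proj2 (transporterP k)).

Lemma relabelE k z :
  existT (strat G) k (relabel k z) = gb_act (transporter k) (existT _ i0 z).
Proof. exact: existT_eq_rect. Qed.

Lemma relabel_equivariant g k z : Gr g -> relabel (gpi g k) z = gtau g k (relabel k z).
Proof.
move=> Gg; apply: existT_strat_inj.
have -> : existT (strat G) (gpi g k) (gtau g k (relabel k z))
          = gb_act g (existT _ k (relabel k z)) by [].
rewrite !relabelE -gb_act_comp.
have [Gcgk cgk_i0] := transporterP (gpi g k); have [Gck ck_i0] := transporterP k.
apply: symmetry_gb_act_player => //; first exact: symmetry_comp.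
by rewrite /= ck_i0.
Qed.

Lemma relabel_bij k : #|strat G k| = #|strat G i0| -> bijective (relabel k).
Proof.
move=> card_k; apply: inj_card_bij; last by rewrite card_k.
move=> a b eq_ab; apply: existT_strat_inj.
apply: (symmetry_gb_act_inj (proj1 (transporterP k))).
by rewrite -!relabelE eq_ab.
Qed.

End SymmetryGroup.

Theorem mainTheorem16 (G : game) (Gr : gbij G G -> Prop) :
  is_game G -> symmetry_group Gr ->
  player_n_transitive Gr -> strategy_trivial Gr ->
  exists (M S : finType) (v : M -> (M -> S) -> Rdefinitions.R),
    [/\ is_game (common_game v), vnm_symmetric v &
        exists g : gbij G (common_game v), strict_iso g].
Proof.
move=> [two_players strat_gt0 card_strat] symGr transGr trivGr.
have /card_gt0P [i0 _] : 0 < #|player G| by apply: leq_trans two_players.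
exists (player G), (strat G i0), (relabel_util (relabel (i0 := i0) transGr)).
split.
- by split=> // ?; exact: strat_gt0.
- apply: (vnm_symmetric_relabel _ transGr) => [|g k z]; first by case: symGr.
  exact: relabel_equivariant.
- apply: strict_iso_relabel => k.
  exact: (relabel_bij symGr transGr (card_strat k i0)).
Qed.
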